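(* For every $s\in[0,1)$ there exists $C>0$ such that for all $t\ge1$, $\mathbb P_0(Y_t=0)\le C\,t^{-\frac{1-s}{2}}$, where $(Y_t)$ is the Markov chain on $\mathbb N$ with kernel $Q_s$ started at $0$.
   Context: $Q_s$ is the Markov kernel on $\mathbb N=\{0,1,\dots\}$ with $Q_s(0,1)=1$, $Q_s(r,r+1)=\max(\frac12-\frac s{4r},\frac14)$ and $Q_s(r,r-1)=1-Q_s(r,r+1)$ for $r\ge1$. *)

From Stdlib Require Import Reals Lra Lia Arith.
Open Scope R_scope.

Definition Qup (s : R) (r : nat) : R :=
  match r with
  | O => 1
  | S _ => Rmax (1/2 - s / (4 * INR r)) (1/4)
  end.

Definition Q (s : R) (x y : nat) : R :=
  if Nat.eqb y (S x) then Qup s x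
  else if Nat.eqb x (S y) then 1 - Qup s x
  else 0.

(* law s t y = P_0(Y_t = y) = Q_s^t(0,y), by Chapman–Kolmogorov
   P_0(Y_{t+1} = y) = sum_x P_0(Y_t = x) Q_s(x,y).  Since Q_s(x,y) = 0
   unless |x - y| = 1, only x in {0, ..., y+1} contribute, so the sum
   over all x in N equals the finite sum sum_{x=0}^{y+1}. *)
Fixpoint law (s : R) (t : nat) : nat -> R :=
  match t with
  | O => fun y => if Nat.eqb y 0 then 1 else 0
  | S t' => fun y => sum_f_R0 (fun x => law s t' x * Q s x y) (S y)
  end.

(* Let F be the scale function of the chain: F(0) = 0 and Q F = F + 1_{0}.  Then
   E_0 F(Y_t) = sum_{u<t} P_0(Y_u = 0).  The increments of F grow like y^s, so
   F(y) = O((y+1)^(1+s)); splitting at y = sqrt t and using E_0 Y_t^2 <= t (since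
   Q y^2 <= y^2 + 1) bounds this occupation time by O(t^((1+s)/2)).  By reversibility
   P_0(Y_t = 0) is non-increasing along steps of two, so the occupation time up to t+1
   is at least (t+1) P_0(Y_t = 0) / 2. *)

From Stdlib Require Import Reals Lra Lia Psatz.
Open Scope R_scope.

Lemma Rpower_pos x a : 0 < Rpower x a.
Proof. apply exp_pos. Qed.

(* Weighted AM-GM: combine the tangent lines of exp at [a ln x], taken at [ln x] and at
   [0], with weights [a] and [1 - a]. *)
Lemma Rpower_le_affine x a : 0 < x -> 0 <= a <= 1 -> Rpower x a <= a * x + (1 - a).
Proof.
  intros Hx Ha. unfold Rpower. rewrite <- (exp_ln x Hx) at 2. set (u := ln x).
  assert (Tu : exp (a * u) * (1 + (1 - a) * u) <= exp u).
  { replace (exp u) with (exp (a * u) * exp ((1 - a) * u))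
      by (rewrite <- exp_plus; f_equal; ring).
    apply Rmult_le_compat_l; [apply Rlt_le, exp_pos | apply exp_ineq1_le]. }
  assert (T0 : exp (a * u) * (1 + - (a * u)) <= 1).
  { replace 1 with (exp (a * u) * exp (- (a * u))) at 2
      by (rewrite <- exp_plus, Rplus_opp_r; apply exp_0).
    apply Rmult_le_compat_l; [apply Rlt_le, exp_pos | apply exp_ineq1_le]. }
  assert (Wu : 0 <= a * (exp u - exp (a * u) * (1 + (1 - a) * u)))
    by (apply Rmult_le_pos; lra).
  assert (W0 : 0 <= (1 - a) * (1 - exp (a * u) * (1 + - (a * u))))
    by (apply Rmult_le_pos; lra).
  assert (a * (exp u - exp (a * u) * (1 + (1 - a) * u))
          + (1 - a) * (1 - exp (a * u) * (1 + - (a * u)))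
          = a * exp u + (1 - a) - exp (a * u)) by ring.
  lra.
Qed.

(* Splitting [Z^(1+s)] at [Z = sqrt n]. *)
Lemma Rpower_split_le s n Z : 0 <= s <= 1 -> 0 < n -> 0 < Z ->
  Rpower Z (1 + s) <= Rpower n ((1 + s) / 2) + Z * Z * Rpower n ((s - 1) / 2).
Proof.
  intros Hs Hn HZ. set (r := Rpower n (/ 2)).
  assert (Hr : 0 < r) by apply Rpower_pos.
  replace (Rpower n ((1 + s) / 2)) with (Rpower r (1 + s))
    by (unfold r; rewrite Rpower_mult; f_equal; field).
  replace (Rpower n ((s - 1) / 2)) with (Rpower r (s - 1))
    by (unfold r; rewrite Rpower_mult; f_equal; field).
  pose proof (Rpower_pos r (s - 1)). pose proof (Rpower_pos r (1 + s)).
  destruct (Rle_dec Z r) as [HZr | HZr].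
  - assert (Rpower Z (1 + s) <= Rpower r (1 + s)) by (apply Rle_Rpower_l; lra).
    nra.
  - replace (Rpower Z (1 + s)) with (Z * Z * Rpower Z (s - 1)).
    2:{ replace (1 + s) with (INR 2 + (s - 1)) by (simpl; ring).
        rewrite Rpower_plus, Rpower_pow by exact HZ. simpl; ring. }
    assert (Rpower Z (s - 1) <= Rpower r (s - 1)).
    { replace (s - 1) with (- (1 - s)) by ring. rewrite !Rpower_Ropp.
      apply Rinv_le_contravar; [apply Rpower_pos | apply Rle_Rpower_l; lra]. }
    assert (0 < Z * Z) by nra. nra.
Qed.

Section Chain.

Variable s : R.
Hypothesis Hs : 0 <= s < 1.

Lemma Qup_succ k : Qup s (S k) = (2 * INR (S k) - s) / (4 * INR (S k)).
Proof.
  assert (1 <= INR (S k)) by (apply (le_INR 1); lia).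
  unfold Qup, Rmax. destruct (Rle_dec _ _) as [Hle | Hlt].
  - assert (/ (4 * INR (S k)) <= / 4) by (apply Rinv_le_contravar; lra).
    unfold Rdiv in Hle. nra.
  - field. lra.
Qed.

Lemma Qup_pos k : 0 < Qup s k.
Proof.
  destruct k; [simpl; lra|]. rewrite Qup_succ.
  assert (1 <= INR (S k)) by (apply (le_INR 1); lia).
  apply Rdiv_lt_0_compat; lra.
Qed.

Lemma Qdown_succ_pos k : 0 < 1 - Qup s (S k).
Proof.
  rewrite Qup_succ.
  assert (1 <= INR (S k)) by (apply (le_INR 1); lia).
  replace (1 - _) with ((2 * INR (S k) + s) / (4 * INR (S k))) by (field; lra).
  apply Rdiv_lt_0_compat; lra.
Qed.

Lemma Qup_bounds k : 0 <= Qup s k <= 1.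
Proof.
  pose proof (Qup_pos k).
  destruct k; [simpl; lra|]. pose proof (Qdown_succ_pos k). lra.
Qed.

Lemma Q_up x : Q s x (S x) = Qup s x.
Proof. unfold Q. now rewrite Nat.eqb_refl. Qed.

Lemma Q_down y : Q s (S y) y = 1 - Qup s (S y).
Proof.
  unfold Q. replace (Nat.eqb y (S (S y))) with false by (symmetry; apply Nat.eqb_neq; lia).
  now rewrite Nat.eqb_refl.
Qed.

Lemma Q_far x y : x <> S y -> y <> S x -> Q s x y = 0.
Proof.
  intros Hx Hy. unfold Q.
  now rewrite (proj2 (Nat.eqb_neq _ _) Hy), (proj2 (Nat.eqb_neq _ _) Hx).
Qed.

Lemma law_succ_0 t : law s (S t) 0 = law s t 1 * (1 - Qup s 1).
Proof. simpl. unfold Q. simpl. ring. Qed.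

Lemma sum_f_R0_last (f : nat -> R) n :
  (forall x, (x < n)%nat -> f x = 0) -> sum_f_R0 f n = f n.
Proof.
  intros Hf. destruct n; [reflexivity|].
  rewrite tech5, sum_eq_R0; [ring|]. intros x Hx. apply Hf. lia.
Qed.

Lemma law_succ_succ t k : law s (S t) (S k) =
  law s t k * Qup s k + law s t (S (S k)) * (1 - Qup s (S (S k))).
Proof.
  change (law s (S t) (S k)) with
    (sum_f_R0 (fun x => law s t x * Q s x (S k)) (S (S k))).
  rewrite !tech5, sum_f_R0_last.
  - rewrite Q_up, Q_down, (Q_far (S k)) by lia. ring.
  - intros x Hx. rewrite Q_far by lia. ring.
Qed.

Lemma law_beyond t y : (t < y)%nat -> law s t y = 0.
Proof.
  revert y; induction t as [|t IH]; intros y Hy.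
  - destruct y; [lia|reflexivity].
  - destruct y; [lia|]. rewrite law_succ_succ, !IH by lia. ring.
Qed.

Lemma law_nonneg t y : 0 <= law s t y.
Proof.
  revert y; induction t as [|t IH]; intros y.
  - simpl. destruct (Nat.eqb y 0); lra.
  - pose proof (Qup_bounds 1). destruct y.
    + rewrite law_succ_0. pose proof (IH 1%nat). nra.
    + rewrite law_succ_succ. pose proof (Qup_bounds y). pose proof (Qup_bounds (S (S y))).
      pose proof (IH y). pose proof (IH (S (S y))). nra.
Qed.

Definition Qapply (g : nat -> R) (x : nat) : R :=
  Qup s x * g (S x) + (1 - Qup s x) * g (pred x).

(* [law] moves at most one step per unit of time, so the sum over [y <= t] is the full expectation. *)
Definition expect (t : nat) (g : nat -> R) : R :=
  sum_f_R0 (fun y => law s t y * g y) t.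

Lemma sum_law_succ t g M :
  sum_f_R0 (fun y => law s (S t) y * g y) M =
  sum_f_R0 (fun x => law s t x * Qapply g x) M +
  (law s t (S M) * (1 - Qup s (S M)) * g M - law s t M * Qup s M * g (S M)).
Proof.
  unfold Qapply. induction M as [|M IH].
  - cbn [sum_f_R0 pred]. rewrite law_succ_0. change (Qup s 0) with 1. ring.
  - rewrite !tech5, IH, law_succ_succ. simpl pred. ring.
Qed.

Lemma expect_succ t g : expect (S t) g = expect t (Qapply g).
Proof.
  unfold expect. rewrite sum_law_succ, tech5.
  rewrite (law_beyond t (S t)), (law_beyond t (S (S t))) by lia. ring.
Qed.

Lemma expect_0 g : expect 0 g = g 0%nat.
Proof. unfold expect. simpl. ring. Qed.

Lemma expect_ext t g g' : (forall y, g y = g' y) -> expect t g = expect t g'.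
Proof. intros H. unfold expect. apply sum_eq. intros y _. now rewrite H. Qed.

Lemma expect_le t g g' : (forall y, g y <= g' y) -> expect t g <= expect t g'.
Proof.
  intros H. unfold expect. apply sum_Rle. intros y _.
  apply Rmult_le_compat_l; [apply law_nonneg | apply H].
Qed.

Lemma expect_lin t a b g1 g2 :
  expect t (fun y => a * g1 y + b * g2 y) = a * expect t g1 + b * expect t g2.
Proof.
  unfold expect. rewrite !scal_sum, <- sum_plus.
  apply sum_eq. intros y _. cbv beta. ring.
Qed.

Lemma expect_one t : expect t (fun _ => 1) = 1.
Proof.
  induction t as [|t IH]; [apply expect_0|].
  rewrite expect_succ, (expect_ext _ _ (fun _ => 1)); [exact IH|].
  intros y. unfold Qapply. ring.
Qed.

Definition sq (y : nat) : R := INR y * INR y.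

Lemma Qapply_sq_le y : Qapply sq y <= sq y + 1.
Proof.
  unfold Qapply, sq. destruct y; [simpl; lra|].
  rewrite Qup_succ. simpl pred. rewrite (S_INR (S y)).
  replace (INR y) with (INR (S y) - 1) by (rewrite S_INR; ring).
  assert (1 <= INR (S y)) by (apply (le_INR 1); lia).
  set (X := INR (S y)) in *.
  replace ((2 * X - s) / (4 * X) * ((X + 1) * (X + 1)) +
           (1 - (2 * X - s) / (4 * X)) * ((X - 1) * (X - 1)))
    with (X * X + 1 - s) by (field; lra).
  lra.
Qed.

Lemma expect_sq_le t : expect t sq <= INR t.
Proof.
  induction t as [|t IH].
  - rewrite expect_0. unfold sq. simpl. lra.
  - rewrite expect_succ, S_INR.
    apply Rle_trans with (expect t (fun y => 1 * sq y + 1 * 1)).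
    + apply expect_le. intros y. pose proof (Qapply_sq_le y). lra.
    + rewrite expect_lin, expect_one. lra.
Qed.

(* [law_to0 t y] is P_y(Y_t = 0), computed by the backward equation. *)
Fixpoint law_to0 (t y : nat) : R :=
  match t, y with
  | O, _ => if Nat.eqb y 0 then 1 else 0
  | S t', O => law_to0 t' 1
  | S t', S k => (1 - Qup s (S k)) * law_to0 t' k + Qup s (S k) * law_to0 t' (S (S k))
  end.

(* The reversible measure of the birth-death chain, normalised at 0. *)
Fixpoint rev_weight (y : nat) : R :=
  match y with
  | O => 1
  | S k => rev_weight k * Qup s k / (1 - Qup s (S k))
  end.

Lemma law_rev t y : law s t y = rev_weight y * law_to0 t y.
Proof.
  revert y; induction t as [|t IH]; intros y.
  - destruct y; simpl; ring.
  - destruct y as [|y].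
    + rewrite law_succ_0, IH. pose proof (Qdown_succ_pos 0).
      cbn [rev_weight law_to0]. change (Qup s 0) with 1. field. lra.
    + rewrite law_succ_succ, !IH. pose proof (Qdown_succ_pos y). pose proof (Qdown_succ_pos (S y)).
      cbn [rev_weight law_to0]. field. lra.
Qed.

Lemma law_to0_succ_succ_le t y : law_to0 t (S (S y)) <= law_to0 t y.
Proof.
  revert y; induction t as [|t IH]; intros y.
  - simpl. destruct y; simpl; lra.
  - (* both sides are bounded by [law_to0 t (S y)] *)
    pose proof (Qup_bounds (S (S y))). pose proof (IH (S y)).
    destruct y as [|y]; cbn [law_to0].
    + nra.
    + pose proof (Qup_bounds (S y)). pose proof (IH y). nra.
Qed.

Lemma law0_succ_succ_le t : law s (S (S t)) 0 <= law s t 0.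
Proof.
  rewrite !law_rev. cbn [rev_weight law_to0].
  pose proof (law_to0_succ_succ_le t 0). pose proof (Qup_bounds 1). nra.
Qed.

Fixpoint occupation0 (t : nat) : R :=
  match t with
  | O => 0
  | S u => occupation0 u + law s u 0
  end.

Lemma occupation0_ge t : INR (S t) * law s t 0 <= 2 * occupation0 (S t).
Proof.
  assert (G : forall t, INR (S t) * law s t 0 <= 2 * occupation0 (S t) /\
                        INR (S (S t)) * law s (S t) 0 <= 2 * occupation0 (S (S t))).
  { clear t. induction t as [|t IH].
    - pose proof (law_nonneg 0 0). pose proof (law_nonneg 1 0). simpl in *. lra.
    - destruct IH as [IH0 IH1]. split; [exact IH1|].
      pose proof (law0_succ_succ_le t). pose proof (law_nonneg (S t) 0).
      cbn [occupation0] in *. rewrite !S_INR in *. pose proof (pos_INR t). nra. }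
  apply G.
Qed.

Fixpoint scale_incr (k : nat) : R :=
  match k with
  | O => 1
  | S k' => scale_incr k' * (1 - Qup s (S k')) / Qup s (S k')
  end.

Fixpoint scale (y : nat) : R :=
  match y with
  | O => 0
  | S k => scale k + scale_incr k
  end.

Definition ind0 (y : nat) : R := if Nat.eqb y 0 then 1 else 0.

Lemma Qapply_scale y : Qapply scale y = 1 * scale y + 1 * ind0 y.
Proof.
  unfold Qapply, ind0. destruct y as [|y]; [simpl; ring|].
  pose proof (Qup_pos (S y)). cbn [scale scale_incr pred Nat.eqb]. field. lra.
Qed.

Lemma expect_ind0 t : expect t ind0 = law s t 0.
Proof.
  unfold expect. generalize t at 2. intros n. induction n as [|n IH].
  - unfold ind0. simpl. ring.
  - rewrite tech5, IH. unfold ind0. simpl. ring.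
Qed.

Lemma expect_scale t : expect t scale = occupation0 t.
Proof.
  induction t as [|t IH]; [now rewrite expect_0|].
  rewrite expect_succ, (expect_ext _ _ _ Qapply_scale), expect_lin, IH, expect_ind0.
  simpl. ring.
Qed.

Lemma scale_incr_succ k :
  scale_incr (S k) = scale_incr k * ((2 * INR (S k) + s) / (2 * INR (S k) - s)).
Proof.
  cbn [scale_incr]. rewrite Qup_succ.
  assert (1 <= INR (S k)) by (apply (le_INR 1); lia).
  field. lra.
Qed.

(* With [B = k + 1 + s/2] the next ratio is [B / (B - s)], and weighted AM-GM gives
   [((B - 1) / B)^s <= (B - s) / B]. *)
Lemma scale_incr_le_pos k : 0 < s ->
  scale_incr k * Rpower (s / 2) s <= Rpower (INR k + s / 2) s.
Proof.
  intros Hs0. induction k as [|k IH].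
  - simpl. rewrite Rplus_0_l. lra.
  - rewrite scale_incr_succ.
    set (a := INR k + s / 2) in *. set (B := a + 1).
    assert (Ha : 0 < a) by (unfold a; pose proof (pos_INR k); lra).
    replace (INR (S k) + s / 2) with B by (unfold B, a; rewrite S_INR; ring).
    replace ((2 * INR (S k) + s) / (2 * INR (S k) - s)) with (B / (B - s))
      by (unfold B, a; rewrite S_INR; field; pose proof (pos_INR k); lra).
    assert (Hratio : Rpower (a / B) s <= (B - s) / B).
    { eapply Rle_trans.
      - apply Rpower_le_affine; [apply Rdiv_lt_0_compat; unfold B|]; lra.
      - right. unfold B. field. lra. }
    assert (Hsplit : Rpower a s = Rpower (a / B) s * Rpower B s).
    { rewrite Rpower_mult_distr by (try apply Rdiv_lt_0_compat; unfold B; lra).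
      f_equal. field. unfold B; lra. }
    pose proof (Rpower_pos B s). pose proof (Rpower_pos (a / B) s).
    assert (HBs : 0 < B - s) by (unfold B; lra).
    assert (0 < B / (B - s)) by (apply Rdiv_lt_0_compat; unfold B in *; lra).
    apply Rle_trans with (Rpower a s * (B / (B - s))); [nra|].
    rewrite Hsplit.
    apply Rle_trans with ((B - s) / B * Rpower B s * (B / (B - s))).
    { apply Rmult_le_compat_r; [lra|]. apply Rmult_le_compat_r; lra. }
    right. field. split; unfold B in *; lra.
Qed.

Lemma scale_incr_le k : scale_incr k * Rpower (s / 2) s <= Rpower (INR k + 1) s.
Proof.
  pose proof (pos_INR k).
  destruct (Req_dec s 0) as [Hs0 | Hs0].
  - assert (Hincr : forall k, scale_incr k = 1).
    { induction k0 as [|k0 IH]; [reflexivity|].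
      rewrite scale_incr_succ, IH, Hs0. field.
      pose proof (pos_INR k0). rewrite S_INR. lra. }
    rewrite Hincr, Hs0. unfold Rpower. rewrite !Rmult_0_l, exp_0. lra.
  - eapply Rle_trans; [apply scale_incr_le_pos; lra|].
    apply Rle_Rpower_l; lra.
Qed.

Lemma scale_le y : scale y * Rpower (s / 2) s <= Rpower (INR y + 1) (1 + s).
Proof.
  pose proof (pos_INR y).
  rewrite Rpower_plus, Rpower_1 by lra.
  assert (Hlin : scale y * Rpower (s / 2) s <= INR y * Rpower (INR y + 1) s).
  { induction y as [|y IH]; [simpl; lra|].
    cbn [scale]. rewrite S_INR.
    pose proof (scale_incr_le y). pose proof (pos_INR y).
    assert (Rpower (INR y + 1) s <= Rpower (INR y + 1 + 1) s) by (apply Rle_Rpower_l; lra).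
    nra. }
  pose proof (Rpower_pos (INR y + 1) s). nra.
Qed.

Lemma occupation0_le N : (1 <= N)%nat ->
  Rpower (s / 2) s * occupation0 N <= 5 * Rpower (INR N) ((1 + s) / 2).
Proof.
  intros HN. set (n := INR N).
  assert (Hn : 1 <= n) by (apply (le_INR 1); exact HN).
  set (A := Rpower n ((1 + s) / 2)). set (B := Rpower n ((s - 1) / 2)).
  assert (HB : 0 < B) by apply Rpower_pos.
  assert (HnB : n * B = A).
  { unfold A, B. rewrite <- (Rpower_1 n) at 1 by lra. rewrite <- Rpower_plus. f_equal. field. }
  rewrite <- expect_scale.
  replace (Rpower (s / 2) s * expect N scale)
    with (expect N (fun y => Rpower (s / 2) s * scale y + 0 * scale y))
    by (rewrite expect_lin; ring).
  apply Rle_trans with (expect N (fun y => A * 1 + B * (3 * sq y + 1 * 1))).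
  - apply expect_le. intros y.
    pose proof (scale_le y). pose proof (pos_INR y).
    pose proof (Rpower_split_le s n (INR y + 1) ltac:(lra) ltac:(lra) ltac:(lra)) as Hsplit.
    fold A B in Hsplit.
    assert ((INR y + 1) * (INR y + 1) <= 3 * sq y + 1 * 1).
    { unfold sq. destruct y; [simpl; lra|]. rewrite S_INR. pose proof (pos_INR y). nra. }
    nra.
  - rewrite expect_lin, expect_one, (expect_lin N 3 1), expect_one.
    pose proof (expect_sq_le N) as Hsq. fold n in Hsq. nra.
Qed.

Lemma law0_le t :
  Rpower (s / 2) s * law s t 0 <= 10 * Rpower (INR (S t)) (- ((1 - s) / 2)).
Proof.
  pose proof (occupation0_ge t) as Hlow.
  pose proof (occupation0_le (S t) ltac:(lia)) as Hup.
  set (c := Rpower (s / 2) s) in *. assert (Hc : 0 < c) by apply Rpower_pos.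
  set (m := INR (S t)) in *. assert (Hm : 1 <= m) by (apply (le_INR 1); lia).
  replace (Rpower m (- ((1 - s) / 2))) with (Rpower m ((1 + s) / 2) / m).
  2:{ replace (- ((1 - s) / 2)) with ((1 + s) / 2 + Ropp 1) by field.
      rewrite Rpower_plus, Rpower_Ropp, Rpower_1 by lra. field. lra. }
  apply (Rmult_le_reg_l m); [lra|].
  replace (m * (10 * (Rpower m ((1 + s) / 2) / m))) with (10 * Rpower m ((1 + s) / 2))
    by (field; lra).
  nra.
Qed.

End Chain.

Theorem lemma6p3 :
  forall s : R, 0 <= s < 1 ->
  exists C : R, 0 < C /\
    forall t : nat, (1 <= t)%nat ->
      law s t 0%nat <= C * Rpower (INR t) (- ((1 - s) / 2)).
Proof.
  intros s Hs. set (c := Rpower (s / 2) s).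
  assert (Hc : 0 < c) by apply Rpower_pos.
  exists (10 / c). split; [apply Rdiv_lt_0_compat; lra|].
  intros t Ht.
  assert (Hdecay : Rpower (INR (S t)) (- ((1 - s) / 2)) <= Rpower (INR t) (- ((1 - s) / 2))).
  { rewrite !Rpower_Ropp. apply Rinv_le_contravar; [apply Rpower_pos|].
    apply Rle_Rpower_l; [lra|]. rewrite S_INR. pose proof (le_INR 1 t Ht). simpl in *. lra. }
  pose proof (law0_le s Hs t) as Hlaw. fold c in Hlaw.
  apply (Rmult_le_reg_l c); [exact Hc|].
  replace (c * (10 / c * Rpower (INR t) (- ((1 - s) / 2))))
    with (10 * Rpower (INR t) (- ((1 - s) / 2))) by (field; lra).
  lra.
Qed.
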